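(* Let $L$ and $M$ be Euclidean lattices normalized so that $\mu_{\max}(L)=\mu_{\max}(M)=0$, and let $\alpha\in L\otimes M$. Then $|\alpha|\ge \sqrt{l(\alpha)}$.
   Context: A Euclidean lattice $L$ of rank $n$ is a discrete subgroup of rank $n$ spanning an $n$-dimensional real inner product space $L_{\mathbb{R}}$; $\deg(L)=-\log\mathrm{vol}(L_{\mathbb{R}}/L)$, $\mu(L)=\deg(L)/\operatorname{rk}(L)$. A sublattice is a subgroup with the induced inner product on its real span. $\mu_{\max}(M)=\max\{\mu(S): S\subseteq M \text{ a nonzero sublattice}\}$. The lattice $L\otimes M\subset L_{\mathbb{R}}\otimes M_{\mathbb{R}}$ has inner product $(v\otimes w,v'\otimes w')=(v,v')(w,w')$, and $|\alpha|$ denotes the norm. The length $l(\alpha)$ of $\alpha\in L\otimes M$ is the minimal integer $l\ge 0$ such that $\alpha=\sum_{k=1}^{l}u_k\otimes u_k'$ with $u_k\in L$, $u_k'\in M$. *)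

From HB Require Import structures.
From mathcomp Require Import all_boot all_order all_algebra.
From mathcomp Require Import reals exp.
Set Implicit Arguments. Unset Strict Implicit. Unset Printing Implicit Defensive.
Import Order.TTheory GRing.Theory Num.Theory.
Local Open Scope ring_scope.

Section Lattices.
Variable R : realType.

Definition intmx (p q : nat) (A : 'M[int]_(p, q)) : 'M[R]_(p, q) :=
  map_mx (fun z : int => z%:~R) A.

(* A Euclidean lattice of rank n in R^N (standard inner product) given by a
   basis: the rows of B, which must be linearly independent. *)
Definition euclidean_lattice (n N : nat) (B : 'M[R]_(n, N)) : Prop := row_free B.

Definition in_lattice (n N : nat) (B : 'M[R]_(n, N)) (v : 'rV[R]_N) : Prop :=
  exists z : 'rV[int]_n, v = intmx z *m B.

(* S (rows = a basis) spans a nonzero sublattice of L; every nonzero subgroup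
   of L is free and arises this way. *)
Definition sublattice (n N : nat) (B : 'M[R]_(n, N)) (r : nat) (S : 'M[R]_(r, N))
  : Prop :=
  (0 < r)%N /\ row_free S /\ (forall i, in_lattice B (row i S)).

(* deg = - log covol, covol = sqrt (det Gram) *)
Definition lat_deg (r N : nat) (S : 'M[R]_(r, N)) : R :=
  - (ln (\det (S *m S^T)) / 2).

Definition lat_slope (r N : nat) (S : 'M[R]_(r, N)) : R := lat_deg S / r%:R.

Definition is_mu_max (n N : nat) (B : 'M[R]_(n, N)) (x : R) : Prop :=
  (exists r (S : 'M[R]_(r, N)), sublattice B S /\ lat_slope S = x) /\
  (forall r (S : 'M[R]_(r, N)), sublattice B S -> lat_slope S <= x).

(* R^N (x) R^K is identified with N x K matrices, v (x) w |-> v^T w;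
   the tensor inner product is then the Frobenius inner product. *)
Definition in_tensor (n N m K : nat) (B : 'M[R]_(n, N)) (C : 'M[R]_(m, K))
  (a : 'M[R]_(N, K)) : Prop :=
  exists A : 'M[int]_(n, m), a = B^T *m intmx A *m C.

Definition tnorm (N K : nat) (a : 'M[R]_(N, K)) : R :=
  Num.sqrt (\sum_(i < N) \sum_(j < K) a i j ^+ 2).

Definition decomposable (n N m K : nat) (B : 'M[R]_(n, N)) (C : 'M[R]_(m, K))
  (a : 'M[R]_(N, K)) (l : nat) : Prop :=
  exists (u : 'I_l -> 'rV[R]_N) (w : 'I_l -> 'rV[R]_K),
    (forall k, in_lattice B (u k)) /\ (forall k, in_lattice C (w k)) /\
    a = \sum_(k < l) (u k)^T *m w k.

Definition is_length (n N m K : nat) (B : 'M[R]_(n, N)) (C : 'M[R]_(m, K))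
  (a : 'M[R]_(N, K)) (l : nat) : Prop :=
  decomposable B C a l /\ (forall l', decomposable B C a l' -> (l <= l')%N).

End Lattices.

From HB Require Import structures.
From mathcomp Require Import all_boot all_order all_algebra.
From mathcomp Require Import reals exp.
Set Implicit Arguments. Unset Strict Implicit. Unset Printing Implicit Defensive.
Import Order.TTheory GRing.Theory Num.Theory.
Local Open Scope ring_scope.

(* Via the Smith normal form of its integer coefficient matrix, alpha is a
   sum of r >= l(alpha) tensors g_k (x) h_k where the g_k in L and the h_k in M
   are linearly independent; the normalisation mu_max = 0 says precisely that
   the lattices they span have covolume at least 1, i.e. det (G G^T) >= 1 and
   det (H H^T) >= 1.  Factoring G = T E and H = S F with E, F having orthonormal
   rows, |alpha|^2 = |G^T H|^2 = |T^T S|^2, and for a square r x r matrix X,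
   AM-GM together with Hadamard's inequality gives
   |X|^2 >= r (det X)^(2/r) >= r. *)

Lemma det_gram_orthonormal (R : comNzRingType) r n (T : 'M[R]_r) (E : 'M[R]_(r, n)) :
  E *m E^T = 1%:M -> \det ((T *m E) *m (T *m E)^T) = \det T ^+ 2.
Proof.
move=> Eo; rewrite trmx_mul mulmxA -(mulmxA T) Eo mulmx1 det_mulmx det_tr.
by rewrite expr2.
Qed.

Lemma mxtrace_gram_orthonormal (R : comNzRingType) r p q (E : 'M[R]_(r, p))
    (F : 'M[R]_(r, q)) (X : 'M[R]_r) :
    E *m E^T = 1%:M -> F *m F^T = 1%:M ->
  \tr ((E^T *m X *m F) *m (E^T *m X *m F)^T) = \tr (X *m X^T).
Proof.
move=> Eo Fo; rewrite !trmx_mul trmxK -!mulmxA (mulmxA F) Fo mul1mx.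
by rewrite mxtrace_mulC -!mulmxA Eo mulmx1.
Qed.

Lemma card_le_sum_of_prod_ge1 (R : realFieldType) (I : finType) (E : I -> R) :
  (forall i, 0 <= E i) -> 1 <= \prod_i E i -> #|I|%:R <= \sum_i E i.
Proof.
move=> E_ge0 prod_ge1; have [->|n_gt0] := posnP #|I|; first exact: sumr_ge0.
have := (leif_AGM (A := I) (fun i _ => E_ge0 i)).1.
move/(le_trans prod_ge1); set mu := _ / _ => mu_ge1.
have mu_ge0 : 0 <= mu by rewrite divr_ge0 ?sumr_ge0.
rewrite -(mul1r #|I|%:R) -ler_pdivlMr ?ltr0n // -/mu leNgt.
by apply: contraTN mu_ge1 => /(exprn_ilt1 #|I| mu_ge0); rewrite -lt0n n_gt0 -ltNge.
Qed.

Lemma mulmx_tr_sum_row (R : pzSemiRingType) r p q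
    (G : 'M[R]_(r, p)) (H : 'M[R]_(r, q)) :
  G^T *m H = \sum_k (row k G)^T *m row k H.
Proof.
apply/matrixP => i j; rewrite !mxE summxE; apply: eq_bigr => k _.
by rewrite !mxE big_ord1 !mxE.
Qed.

Lemma row_free_pivots (F : fieldType) r n (M : 'M[F]_(r, n)) (e : 'I_r -> 'I_n) :
    (forall k, M k (e k) != 0) -> (forall k k', k' != k -> M k' (e k) = 0) ->
  row_free M.
Proof.
move=> Mkk Mk'k; apply/inj_row_free => v /rowP vM0; apply/rowP => k.
move: (vM0 (e k)); rewrite !mxE (bigD1 k) //= big1 => [|k' k'k]; last first.
  by rewrite Mk'k // mulr0.
by rewrite addr0 => /eqP; rewrite mulf_eq0 (negbTE (Mkk k)) orbF => /eqP.
Qed.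

Section GramSchmidt.
Variable R : rcfType.

Lemma gram_diag_ge0 m n (A : 'M[R]_(m, n)) i : 0 <= (A *m A^T) i i.
Proof. by rewrite mxE; apply: sumr_ge0 => j _; rewrite mxE -expr2 sqr_ge0. Qed.

Lemma gram_row_gt0 n (v : 'rV[R]_n) : v != 0 -> 0 < (v *m v^T) 0 0.
Proof.
move=> vn0; rewrite lt_def gram_diag_ge0 andbT; apply: contraNneq vn0 => v0.
have v2_eq0 j : v 0 j * v^T j 0 = 0.
  by move: v0; rewrite mxE => /psumr_eq0P; apply=> // k _; rewrite mxE -expr2 sqr_ge0.
apply/eqP/rowP => j; move/eqP: (v2_eq0 j); rewrite mxE -expr2 sqrf_eq0 mxE.
by move/eqP.
Qed.

Lemma gram_addr_orthogonal n (u w : 'rV[R]_n) : u *m w^T = 0 ->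
  (u + w) *m (u + w)^T = u *m u^T + w *m w^T.
Proof.
move=> uw; have wu : w *m u^T = 0 by rewrite -[w]trmxK -trmx_mul uw trmx0.
by rewrite linearD /= mulmxDl !mulmxDr uw wu addr0 add0r.
Qed.

Lemma gram_schmidt_step r n (h : 'rV[R]_n) (F : 'M[R]_(r, n)) :
    F *m F^T = 1%:M -> h - h *m F^T *m F != 0 ->
  exists2 nu : R, 0 < nu & exists f : 'rV_n,
    [/\ h = nu%:M *m f + h *m F^T *m F, f *m f^T = 1%:M, F *m f^T = 0
      & nu ^+ 2 <= (h *m h^T) 0 0].
Proof.
set c := h *m F^T; set v := h - c *m F => Fo vn0.
have Fv : F *m v^T = 0.
  by rewrite /v /c linearB /= !trmx_mul !trmxK mulmxBr (mulmxA F) Fo mul1mx subrr.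
have vF : v *m F^T = 0 by rewrite -[v *m _]trmxK trmx_mul trmxK Fv trmx0.
have v_gt0 := gram_row_gt0 vn0; pose nu := Num.sqrt ((v *m v^T) 0 0).
have nu_gt0 : 0 < nu by rewrite sqrtr_gt0.
have nu2 : nu ^+ 2 = (v *m v^T) 0 0 by rewrite sqr_sqrtr // ltW.
exists nu => //; exists (nu^-1 *: v); split.
- by rewrite -scalemxAr mul_scalar_mx scalerA mulVf ?gt_eqF // scale1r subrK.
- rewrite linearZ /= -scalemxAr -scalemxAl scalerA -expr2 (mx11_scalar (v *m _)).
  by rewrite -nu2 -scalemx1 scalerA -exprMn mulVf ?gt_eqF // expr1n scale1r.
- by rewrite linearZ /= -scalemxAr Fv scaler0.
have -> : h *m h^T = v *m v^T + c *m c^T.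
  have vcF : v *m (c *m F)^T = 0 by rewrite trmx_mul mulmxA vF mul0mx.
  rewrite -[h](subrK (c *m F)) -/v gram_addr_orthogonal // trmx_mul.
  by rewrite -mulmxA (mulmxA F) Fo mul1mx.
by rewrite nu2 [X in _ <= X]mxE lerDl gram_diag_ge0.
Qed.

Lemma row_free_col_mxr m1 m2 n (A : 'M[R]_(m1, n)) (B : 'M[R]_(m2, n)) :
  row_free (col_mx A B) -> row_free B.
Proof.
move=> frAB; apply/inj_row_free => v vB0.
have : row_mx 0 v *m col_mx A B = 0 by rewrite mul_row_col mul0mx add0r.
by move/eqP; rewrite mulmx_free_eq0 // row_mx_eq0 => /andP[_ /eqP].
Qed.

Lemma col_mx_free_residual_neq0 r n (h : 'rV[R]_n) (H : 'M[R]_(r, n)) (S : 'M[R]_r) F :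
    row_free (col_mx h H) -> H = S *m F -> \det S != 0 ->
  h - h *m F^T *m F != 0.
Proof.
move=> frhH eH dS; have uS : S \in unitmx by rewrite unitmxE unitfE.
apply/negP => /eqP hF0.
have : row_mx 1 (- (h *m F^T *m invmx S)) *m col_mx h H = 0.
  by rewrite mul_row_col mul1mx mulNmx eH mulmxA mulmxKV // -mulmxA hF0.
move/eqP; rewrite mulmx_free_eq0 // row_mx_eq0 => /andP[/eqP /rowP/(_ 0)].
by rewrite !mxE => /eqP; rewrite oner_eq0.
Qed.

Lemma lq_decomposition r n (H : 'M[R]_(r, n)) : row_free H ->
  exists (S : 'M[R]_r) (F : 'M[R]_(r, n)),
    [/\ H = S *m F, F *m F^T = 1%:M, \det S != 0
      & \det S ^+ 2 <= \prod_i (H *m H^T) i i].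
Proof.
elim: r H => [|r IH] H frH.
  exists 1%:M, 0; split; rewrite ?det1 ?oner_eq0 ?big_ord0 ?expr1n //.
  - by apply/matrixP => -[].
  - by apply/matrixP => -[].
have [h [H1 eH]] : exists h H1, H = col_mx h H1 :> 'M_(1 + r, n).
  by exists (usubmx (H : 'M_(1 + r, n))), (dsubmx (H : 'M_(1 + r, n))); rewrite vsubmxK.
rewrite eH in frH *.
have [S1 [F1 [eH1 F1o dS1 hS1]]] := IH H1 (@row_free_col_mxr 1 r _ h H1 frH).
have [nu nu_gt0 [f [eh fo F1f hnu]]] :=
  gram_schmidt_step F1o (col_mx_free_residual_neq0 frH eH1 dS1).
rewrite -[r.+1]/(1 + r)%N. (* so that block-matrix lemmas match syntactically *)
exists (block_mx nu%:M (h *m F1^T) 0 S1), (col_mx f F1); split.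
- by rewrite mul_block_col mul0mx add0r -eH1 -eh.
- rewrite tr_col_mx mul_col_row fo F1o F1f -[f *m F1^T]trmxK trmx_mul trmxK F1f.
  by rewrite trmx0 -scalar_mx_block.
- by rewrite det_ublock det_scalar1 mulf_neq0 // gt_eqF.
rewrite det_ublock det_scalar1 exprMn tr_col_mx mul_col_row big_split_ord /=.
rewrite big_ord1 block_mxEul; under eq_bigr do rewrite block_mxEdr.
by apply: ler_pM; rewrite ?sqr_ge0.
Qed.

Lemma det_gram_gt0 r n (G : 'M[R]_(r, n)) : row_free G -> 0 < \det (G *m G^T).
Proof.
move=> /lq_decomposition[T [E [-> Eo dT _]]].
by rewrite det_gram_orthonormal // exprn_even_gt0.
Qed.

Lemma hadamard n (X : 'M[R]_n) : \det X ^+ 2 <= \prod_i (X *m X^T) i i.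
Proof.
have [/lq_decomposition[S [F [eX Fo _ hS]]] | ] := boolP (row_free X).
  by rewrite -(det_gram_orthonormal S Fo) -eX det_mulmx det_tr -expr2 in hS.
rewrite row_free_unit unitmxE unitfE negbK => /eqP->.
by rewrite expr0n prodr_ge0 // => i _; apply: gram_diag_ge0.
Qed.
End GramSchmidt.

Section Lattices.
Variable R : realType.

Lemma tnormE p q (a : 'M[R]_(p, q)) : tnorm a = Num.sqrt (\tr (a *m a^T)).
Proof.
congr Num.sqrt; apply: eq_bigr => i _; rewrite mxE.
by apply: eq_bigr => j _; rewrite mxE expr2.
Qed.

Lemma sqrt_rows_le_tnorm r p q (G : 'M[R]_(r, p)) (H : 'M[R]_(r, q)) :
    row_free G -> row_free H ->
    1 <= \det (G *m G^T) -> 1 <= \det (H *m H^T) ->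
  Num.sqrt r%:R <= tnorm (G^T *m H).
Proof.
move=> /lq_decomposition[T [E [-> Eo _ _]]] /lq_decomposition[S [F [-> Fo _ _]]].
rewrite !det_gram_orthonormal // => T_ge1 S_ge1.
have -> : (T *m E)^T *m (S *m F) = E^T *m (T^T *m S) *m F by rewrite trmx_mul !mulmxA.
rewrite tnormE mxtrace_gram_orthonormal // ler_wsqrtr // -[r in r%:R]card_ord.
apply: card_le_sum_of_prod_ge1 => [i|]; first exact: gram_diag_ge0.
apply: le_trans (hadamard _).
by rewrite det_mulmx det_tr exprMn mulr_ege1.
Qed.

Lemma intmxM p q s (A : 'M[int]_(p, q)) (B : 'M[int]_(q, s)) :
  intmx R (A *m B) = intmx R A *m intmx R B.
Proof. exact: map_mxM. Qed.

Lemma intmx_tr p q (A : 'M[int]_(p, q)) : (intmx R A)^T = intmx R A^T.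
Proof. exact: map_trmx. Qed.

Lemma intmx_unit p (A : 'M[int]_p) : A \in unitmx -> intmx R A \in unitmx.
Proof.
rewrite !unitmxE unitfE /intmx det_map_mx intr_eq0.
by apply: contraTneq => ->; rewrite unitr0.
Qed.

Lemma row_free_intmxMunit r p (X : 'M[int]_(r, p)) (U : 'M[int]_p) :
  U \in unitmx -> row_free (intmx R (X *m U)) = row_free (intmx R X).
Proof.
by move=> uU; rewrite intmxM /row_free mxrankMfree // row_free_unit intmx_unit.
Qed.

Lemma diag_rank_factorization n m (d : seq int) :
  exists r (X : 'M[int]_(r, n)) (Y : 'M[int]_(r, m)),
    [/\ row_free (intmx R X), row_free (intmx R Y)
      & \matrix_(i, j) (d`_i *+ (i == j :> nat)) = X^T *m Y].
Proof.
pose S := [set i : 'I_(minn n m) | d`_i != 0].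
pose e k : 'I_n := widen_ord (geq_minl n m) (enum_val (A := S) k).
pose f k : 'I_m := widen_ord (geq_minr n m) (enum_val (A := S) k).
have de k : d`_(e k) != 0 by have := enum_valP k; rewrite inE.
have e_inj : injective e.
  by move=> k k' ekk'; apply/enum_val_inj/val_inj; exact: (congr1 val ekk').
exists #|S|, (\matrix_(k, i) (d`_i *+ (i == e k))).
exists (\matrix_(k, j) (j == f k :> nat)%:R); split.
- apply: (row_free_pivots (e := e)) => [k|k k' k'k]; rewrite !mxE.
    by rewrite eqxx mulr1n intr_eq0.
  by rewrite (inj_eq e_inj) eq_sym (negbTE k'k) mulr0n.
- apply: (row_free_pivots (e := f)) => [k|k k' k'k]; rewrite !mxE /=.
    by rewrite eqxx oner_eq0.
  by rewrite (inj_eq val_inj) (inj_eq enum_val_inj) eq_sym (negbTE k'k).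
apply/matrixP => i j; rewrite !mxE.
have [k /eqP eki | no_k] := pickP (fun k => e k == i).
  rewrite (bigD1 k) //= big1 => [|k' k'k]; last first.
    by rewrite !mxE -eki (inj_eq e_inj) eq_sym (negbTE k'k) mulr0n mul0r.
  by rewrite !mxE -eki eqxx mulr1n addr0 mulr_natr eq_sym.
rewrite big1 => [|k _]; last by rewrite !mxE eq_sym no_k mul0r.
have [ij|] := eqVneq (i : nat) j; last by rewrite mulr0n.
apply/eqP; rewrite ij mulr1n; apply: contraT => dj.
have j_lt : (j < minn n m)%N by rewrite leq_min [(j < m)%N]ltn_ord -ij ltn_ord.
have jS : Ordinal j_lt \in S by rewrite inE.
have := no_k (enum_rank_in jS (Ordinal j_lt)).
by rewrite /e enum_rankK_in // -val_eqE /= ij eqxx.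
Qed.

Lemma int_rank_factorization n m (A : 'M[int]_(n, m)) :
  exists r (X : 'M[int]_(r, n)) (Y : 'M[int]_(r, m)),
    [/\ row_free (intmx R X), row_free (intmx R Y) & A = X^T *m Y].
Proof.
have [P uP [Q uQ [d _ ->]]] := int_Smith_normal_form A.
have [r [X [Y [frX frY ->]]]] := diag_rank_factorization n m d.
exists r, (X *m P^T), (Y *m Q); rewrite !row_free_intmxMunit ?unitmx_tr //.
by split=> //; rewrite trmx_mul trmxK !mulmxA.
Qed.

Lemma in_lattice_row_mulmx r n N (X : 'M[int]_(r, n)) (B : 'M[R]_(n, N)) k :
  in_lattice B (row k (intmx R X *m B)).
Proof. by exists (row k X); rewrite row_mul /intmx map_row. Qed.

Lemma tensor_rank_decomposition n N m K (B : 'M[R]_(n, N)) (C : 'M[R]_(m, K)) a :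
    row_free B -> row_free C -> in_tensor B C a ->
  exists r (G : 'M[R]_(r, N)) (H : 'M[R]_(r, K)),
    [/\ row_free G, row_free H, forall k, in_lattice B (row k G),
        forall k, in_lattice C (row k H) & a = G^T *m H].
Proof.
move=> frB frC [A ->]; have [r [X [Y [frX frY ->]]]] := int_rank_factorization A.
exists r, (intmx R X *m B), (intmx R Y *m C).
rewrite /row_free !mxrankMfree //; split=> // [k|k|]; try exact: in_lattice_row_mulmx.
by rewrite intmxM -intmx_tr trmx_mul !mulmxA.
Qed.

Lemma det_gram_ge1 n N (B : 'M[R]_(n, N)) r (X : 'M[R]_(r, N)) :
    (forall r (S : 'M[R]_(r, N)), sublattice B S -> lat_slope S <= 0) ->
    row_free X -> (forall k, in_lattice B (row k X)) ->
  1 <= \det (X *m X^T).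
Proof.
case: r X => [|r] X slope_le0 frX XB; first by rewrite det_mx00.
have := slope_le0 _ X (conj isT (conj frX XB)).
rewrite /lat_slope /lat_deg ler_pdivrMr ?ltr0n // mul0r oppr_le0.
rewrite pmulr_lge0 ?invr_gt0 // => ln_ge0.
by rewrite -ler_ln ?posrE ?ln1 // det_gram_gt0.
Qed.
End Lattices.

Theorem proposition1 (R : realType) (n N m K : nat)
  (B : 'M[R]_(n, N)) (C : 'M[R]_(m, K)) (a : 'M[R]_(N, K)) (l : nat) :
  euclidean_lattice B -> euclidean_lattice C ->
  is_mu_max B 0 -> is_mu_max C 0 ->
  in_tensor B C a -> is_length B C a l ->
  Num.sqrt (l%:R) <= tnorm a.
Proof.
move=> frB frC [_ B_slope] [_ C_slope] aBC [_ l_min].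
have [r [G [H [frG frH GB HC eaGH]]]] := tensor_rank_decomposition frB frC aBC.
have l_le_r : (l <= r)%N.
  apply: l_min; exists (fun k => row k G), (fun k => row k H).
  by do !split=> //; rewrite eaGH mulmx_tr_sum_row.
have GG_ge1 := det_gram_ge1 B_slope frG GB.
have HH_ge1 := det_gram_ge1 C_slope frH HC.
rewrite eaGH (le_trans _ (sqrt_rows_le_tnorm frG frH GG_ge1 HH_ge1)) //.
by rewrite ler_wsqrtr // ler_nat.
Qed.
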